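(* Let $X\subset\mathbb{R}^n$ be amenable at $\bar x\in X$. Then $X$ is nearly convex at $\bar x$ (and hence nearly radial at $\bar x$).
   Context: The tangent cone is $T_X(x)=\{\lim t_r^{-1}(x_r-x):t_r\downarrow0,\ x_r\to x,\ x_r\in X\}$. $X$ is nearly convex at $\bar x$ if $\operatorname{dist}(y,x+T_X(x))=o(\|x-y\|)$ as $x,y\to\bar x$ in $X$. $X$ is nearly radial at $\bar x$ if $\operatorname{dist}(\bar x,x+T_X(x))=o(\|x-\bar x\|)$ as $x\to\bar x$ in $X$. $X$ is amenable at $\bar x$ if there exist an open neighbourhood $V$ of $\bar x$, a $C^1$ map $F:V\to\mathbb{R}^m$ and a closed convex set $D\subset\mathbb{R}^m$ with $X\cap V=\{x\in V:F(x)\in D\}$ and $N_D(F(\bar x))\cap\ker(\nabla F(\bar x)^* )=\{0\}$, where $N_D$ is the normal cone of convex analysis to $D$ and $\nabla F(\bar x)^*$ the adjoint of the Jacobian. *)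

From mathcomp Require Import all_boot.
From Stdlib Require Import Reals.
Open Scope R_scope.

Definition E (n : nat) : Type := 'I_n -> R.

Definition vadd {n} (x y : E n) : E n := fun i => x i + y i.
Definition vsub {n} (x y : E n) : E n := fun i => x i - y i.
Definition vscal {n} (c : R) (x : E n) : E n := fun i => c * x i.

Definition dot {n} (x y : E n) : R := \big[Rplus/0]_(i < n) (x i * y i).
Definition norm {n} (x : E n) : R := sqrt (dot x x).

Definition vconv {n} (u : nat -> E n) (l : E n) : Prop :=
  forall eps, 0 < eps -> exists N : nat, forall r : nat, (N <= r)%coq_nat ->
    norm (vsub (u r) l) < eps.
Definition rconv (u : nat -> R) (l : R) : Prop :=
  forall eps, 0 < eps -> exists N : nat, forall r : nat, (N <= r)%coq_nat ->
    Rabs (u r - l) < eps.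

Definition tangent_cone {n} (X : E n -> Prop) (x : E n) : E n -> Prop :=
  fun v => exists (t : nat -> R) (xs : nat -> E n),
    (forall r, 0 < t r) /\ rconv t 0 /\
    (forall r, X (xs r)) /\ vconv xs x /\
    vconv (fun r => vscal (/ t r) (vsub (xs r) x)) v.

(** dist(y, S) <= c, written out via the infimum defining dist. *)
Definition dist_le {n} (y : E n) (S : E n -> Prop) (c : R) : Prop :=
  forall eta, 0 < eta -> exists s, S s /\ norm (vsub y s) <= c + eta.

Definition translate {n} (x : E n) (T : E n -> Prop) : E n -> Prop :=
  fun z => exists v, T v /\ z = vadd x v.

Definition nearly_convex {n} (X : E n -> Prop) (xbar : E n) : Prop :=
  forall eps, 0 < eps -> exists delta, 0 < delta /\
    forall x y, X x -> X y -> norm (vsub x xbar) < delta -> norm (vsub y xbar) < delta ->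
      dist_le y (translate x (tangent_cone X x)) (eps * norm (vsub x y)).

Definition nearly_radial {n} (X : E n -> Prop) (xbar : E n) : Prop :=
  forall eps, 0 < eps -> exists delta, 0 < delta /\
    forall x, X x -> norm (vsub x xbar) < delta ->
      dist_le xbar (translate x (tangent_cone X x)) (eps * norm (vsub x xbar)).

Definition is_open {n} (V : E n -> Prop) : Prop :=
  forall x, V x -> exists r, 0 < r /\ forall y, norm (vsub y x) < r -> V y.
Definition is_closed {m} (D : E m -> Prop) : Prop :=
  forall (u : nat -> E m) (l : E m), (forall r, D (u r)) -> vconv u l -> D l.
Definition is_convex {m} (D : E m -> Prop) : Prop :=
  forall a b t, D a -> D b -> 0 <= t <= 1 ->
    D (vadd (vscal t a) (vscal (1 - t) b)).

(** Normal cone of convex analysis (z assumed in D). *)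
Definition normal_cone {m} (D : E m -> Prop) (z : E m) : E m -> Prop :=
  fun y => forall d, D d -> dot y (vsub d z) <= 0.

Definition mat (m n : nat) : Type := 'I_m -> 'I_n -> R.
Definition mat_apply {m n} (A : mat m n) (h : E n) : E m :=
  fun i => \big[Rplus/0]_(j < n) (A i j * h j).
Definition mat_adjoint_apply {m n} (A : mat m n) (y : E m) : E n :=
  fun j => \big[Rplus/0]_(i < m) (A i j * y i).

Definition C1_on_with {n m} (V : E n -> Prop) (F : E n -> E m) (J : E n -> mat m n) : Prop :=
  (forall x, V x -> forall eps, 0 < eps -> exists delta, 0 < delta /\
     forall y, norm (vsub y x) < delta ->
       norm (vsub (vsub (F y) (F x)) (mat_apply (J x) (vsub y x))) <= eps * norm (vsub y x)) /\
  (forall x, V x -> forall i j eps, 0 < eps -> exists delta, 0 < delta /\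
     forall y, V y -> norm (vsub y x) < delta -> Rabs (J y i j - J x i j) < eps).

Definition amenable {n} (X : E n -> Prop) (xbar : E n) : Prop :=
  exists (V : E n -> Prop) (m : nat) (F : E n -> E m) (J : E n -> mat m n) (D : E m -> Prop),
    is_open V /\ V xbar /\ C1_on_with V F J /\
    is_closed D /\ is_convex D /\
    (forall x, V x -> (X x <-> D (F x))) /\
    (forall y, normal_cone D (F xbar) y -> mat_adjoint_apply (J xbar) y = (fun _ => 0) ->
       y = (fun _ => 0)).

From HB Require Import structures.
From mathcomp Require Import all_boot.
From Stdlib Require Import Reals Lra Lia Classical ClassicalEpsilon FunctionalExtensionality.
Open Scope R_scope.

(** 1. By compactness of the unit sphere, the qualification condition holds
       uniformly near (xbar, F xbar): c |y| <= |J(z)^* y| for normals y to D at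
       points p near F xbar and z near xbar.
    2. Error bound: the projected gradient step z - s J(z)^* (F z - proj_D (F z))
       contracts the residual dist(F z, D) by a fixed factor and moves z by at
       most a multiple of it, so iterating it reaches a point of X, within
       kappa * dist(F z, D) of z.
    3. Near convexity: for x, y in X near xbar and t = 1/(r+1), convexity of D
       and the uniform strict differentiability of F give
       dist(F(x + t(y - x)), D) = o(t |y - x|); by the error bound x + t(y - x)
       is o(t |y - x|)-close to X, and a limit of the rescaled displacements
       is a tangent vector v at x with |v - (y - x)| = o(|y - x|). *)

(** Rplus is a commutative monoid law, so the generic bigop lemmas
    (splitting, exchange, extraction of one term) apply to real sums. *)
HB.instance Definition _ := Monoid.isComLaw.Build R 0 Rplus
  (fun x y z => esym (Rplus_assoc x y z)) Rplus_comm Rplus_0_l.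

Ltac vext := apply: functional_extensionality => ?; rewrite /vadd /vsub /vscal /=; ring.

Section Sums.
Context {I : finType}.
Implicit Types F G : I -> R.

Lemma sum_scal c F : \big[Rplus/0]_(i : I) (c * F i) = c * \big[Rplus/0]_(i : I) F i.
Proof. by apply: (big_rec2 (fun a b => a = c * b)) => [|i a b _ ->]; ring. Qed.

Lemma sum_add F G :
  \big[Rplus/0]_(i : I) (F i + G i) = \big[Rplus/0]_(i : I) F i + \big[Rplus/0]_(i : I) G i.
Proof. by rewrite big_split. Qed.

Lemma sum_opp F : \big[Rplus/0]_(i : I) (- F i) = - \big[Rplus/0]_(i : I) F i.
Proof. by apply: (big_rec2 (fun a b => a = - b)) => [|i a b _ ->]; ring. Qed.

Lemma sum_sub F G :
  \big[Rplus/0]_(i : I) (F i - G i) = \big[Rplus/0]_(i : I) F i - \big[Rplus/0]_(i : I) G i.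
Proof. by rewrite /Rminus -sum_opp -sum_add. Qed.

Lemma sum_le F G : (forall i, F i <= G i) ->
  \big[Rplus/0]_(i : I) F i <= \big[Rplus/0]_(i : I) G i.
Proof.
by move=> H; apply: (big_rec2 (fun a b => a <= b)) => [|i a b _ Hab]; [lra | have := H i; lra].
Qed.

Lemma sum_nonneg F : (forall i, 0 <= F i) -> 0 <= \big[Rplus/0]_(i : I) F i.
Proof. by move=> H; apply: (big_ind (fun a => 0 <= a)) => //; [lra | move=> a b; lra]. Qed.

Lemma sum_ge_term F j : (forall i, 0 <= F i) -> F j <= \big[Rplus/0]_(i : I) F i.
Proof.
move=> H; rewrite (bigD1 j) //=.
match goal with |- _ <= _ + ?rest => have Hrest : 0 <= rest end.
  by apply: (big_ind (fun a => 0 <= a)) => //; [lra | move=> a b; lra].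
lra.
Qed.

End Sums.

(** The dimension k as a real number; sqrt (dimR k) compares the Euclidean
    norm with the maximum of the coordinates. *)
Definition dimR (k : nat) : R := \big[Rplus/0]_(i < k) 1.

Section Euclid.
Context {k : nat}.
Implicit Types x y z : E k.

Lemma dot_comm x y : dot x y = dot y x.
Proof. by rewrite /dot; apply: eq_bigr => i _; ring. Qed.

Lemma dot_addl x y z : dot (vadd x y) z = dot x z + dot y z.
Proof. by rewrite /dot -sum_add; apply: eq_bigr => i _; rewrite /vadd; ring. Qed.

Lemma dot_subl x y z : dot (vsub x y) z = dot x z - dot y z.
Proof. by rewrite /dot -sum_sub; apply: eq_bigr => i _; rewrite /vsub; ring. Qed.

Lemma dot_scall c x y : dot (vscal c x) y = c * dot x y.
Proof. by rewrite /dot -sum_scal; apply: eq_bigr => i _; rewrite /vscal; ring. Qed.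

Lemma dot_subr x y z : dot z (vsub x y) = dot z x - dot z y.
Proof. by rewrite dot_comm dot_subl !(dot_comm z). Qed.

Lemma dot_scalr c x y : dot y (vscal c x) = c * dot y x.
Proof. by rewrite dot_comm dot_scall dot_comm. Qed.

Lemma dot_zerol y : dot (fun _ => 0) y = 0.
Proof. by rewrite /dot big1 // => i _; ring. Qed.

Lemma dot_ge0 x : 0 <= dot x x.
Proof. by apply: sum_nonneg => i; nra. Qed.

Lemma dot_expand (u w : E k) t :
  dot (vsub u (vscal t w)) (vsub u (vscal t w)) = dot u u - 2 * t * dot u w + t * t * dot w w.
Proof. by rewrite !dot_subl !dot_subr !dot_scall !dot_scalr (dot_comm w u); ring. Qed.

Lemma norm_ge0 x : 0 <= norm x.
Proof. exact: sqrt_pos. Qed.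

Lemma norm_sq x : norm x * norm x = dot x x.
Proof. exact/sqrt_sqrt/dot_ge0. Qed.

Lemma coord_le x i : Rabs (x i) <= norm x.
Proof.
rewrite /norm -(sqrt_Rsqr (Rabs (x i))); last exact: Rabs_pos.
apply: sqrt_le_1_alt; rewrite -Rsqr_abs /Rsqr.
by apply: (sum_ge_term (fun i => x i * x i)) => j; nra.
Qed.

Lemma norm_eq0 x : norm x = 0 -> x = (fun _ => 0).
Proof.
move=> H; apply: functional_extensionality => i.
have := coord_le x i; rewrite H => Hi.
have [//|Hne] := Req_dec (x i) 0.
by have := Rabs_pos_lt _ Hne; lra.
Qed.

Lemma norm_zero : norm (fun _ : 'I_k => 0) = 0.
Proof. by rewrite /norm dot_zerol sqrt_0. Qed.

(** Cauchy-Schwarz, from the expansion of |(|y|) x - (|x|) y|^2. *)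
Lemma dot_le x y : dot x y <= norm x * norm y.
Proof.
have [Hx0|Hx0] := Req_dec (norm x) 0.
  by rewrite (norm_eq0 x Hx0) dot_zerol norm_zero; lra.
have [Hy0|Hy0] := Req_dec (norm y) 0.
  by rewrite dot_comm (norm_eq0 y Hy0) dot_zerol norm_zero; lra.
have Hxy : 0 < norm x * norm y.
  by apply: Rmult_lt_0_compat; have := norm_ge0 x; have := norm_ge0 y; lra.
have Hsq : 0 <= 2 * (norm x * norm y) * (norm x * norm y - dot x y).
  have -> : 2 * (norm x * norm y) * (norm x * norm y - dot x y) =
    dot (vsub (vscal (norm y) x) (vscal (norm x) y)) (vsub (vscal (norm y) x) (vscal (norm x) y)).
    by rewrite !dot_subl !dot_subr !dot_scall !dot_scalr (dot_comm y x) -(norm_sq x) -(norm_sq y); ring.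
  exact: dot_ge0.
have Hpos : 0 < 2 * (norm x * norm y) by lra.
have := Rmult_le_reg_l _ 0 _ Hpos ltac:(rewrite Rmult_0_r; exact: Hsq).
lra.
Qed.

Lemma norm_scal c x : norm (vscal c x) = Rabs c * norm x.
Proof.
rewrite /norm dot_scall dot_scalr -Rmult_assoc sqrt_mult_alt; last exact: (Rle_0_sqr c).
rewrite (_ : c * c = Rsqr (Rabs c)); last by rewrite -Rsqr_abs.
by rewrite sqrt_Rsqr //; exact: Rabs_pos.
Qed.

Lemma abs_dot_le x y : Rabs (dot x y) <= norm x * norm y.
Proof.
have := dot_le (vscal (-1) x) y; rewrite dot_scall norm_scal Rabs_Ropp Rabs_R1.
by have := dot_le x y; move=> ? ?; apply: Rabs_le; lra.
Qed.

Lemma norm_add x y : norm (vadd x y) <= norm x + norm y.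
Proof.
have Hx := norm_ge0 x; have Hy := norm_ge0 y.
apply: Rsqr_incr_0_var; last lra.
have Hexp : dot (vadd x y) (vadd x y) = dot x x + 2 * dot x y + dot y y.
  by rewrite !dot_addl (dot_comm x (vadd x y)) (dot_comm y (vadd x y)) !dot_addl (dot_comm y x); ring.
have Hxy := dot_le x y; have Hnx := norm_sq x; have Hny := norm_sq y.
rewrite /Rsqr norm_sq Hexp; lra.
Qed.

Lemma norm_sub_le x y : norm (vsub x y) <= norm x + norm y.
Proof.
have -> : vsub x y = vadd x (vscal (-1) y) by vext.
by apply: Rle_trans (norm_add _ _) _; rewrite norm_scal Rabs_Ropp Rabs_R1; lra.
Qed.

Lemma norm_sub_sym x y : norm (vsub x y) = norm (vsub y x).
Proof.
have -> : vsub x y = vscal (-1) (vsub y x) by vext.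
by rewrite norm_scal Rabs_Ropp Rabs_R1 Rmult_1_l.
Qed.

Lemma norm_tri x y z : norm (vsub x z) <= norm (vsub x y) + norm (vsub y z).
Proof. have -> : vsub x z = vadd (vsub x y) (vsub y z) by vext. exact: norm_add. Qed.

Lemma norm_sub_same x : norm (vsub x x) = 0.
Proof. have -> : vsub x x = (fun _ => 0) by vext. exact: norm_zero. Qed.

Lemma norm_coord_bound x c : 0 <= c -> (forall i, Rabs (x i) <= c) ->
  norm x <= c * sqrt (dimR k).
Proof.
move=> Hc H; rewrite /norm -(sqrt_Rsqr c) // -sqrt_mult_alt; last by rewrite /Rsqr; nra.
apply: sqrt_le_1_alt; rewrite /dimR -sum_scal; apply: sum_le => i.
have Hi := H i; have Hpos := Rabs_pos (x i); rewrite /Rsqr Rmult_1_r.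
have -> : x i * x i = Rabs (x i) * Rabs (x i) by rewrite -Rabs_mult Rabs_right //; nra.
by apply: Rmult_le_compat.
Qed.

Lemma segment_in_ball x y c d t : norm (vsub x c) < d -> norm (vsub y c) < d -> 0 <= t <= 1 ->
  norm (vsub (vadd x (vscal t (vsub y x))) c) < d.
Proof.
move=> Hx Hy Ht.
have -> : vsub (vadd x (vscal t (vsub y x))) c = vadd (vscal (1 - t) (vsub x c)) (vscal t (vsub y c)).
  by vext.
apply: Rle_lt_trans (norm_add _ _) _; rewrite !norm_scal !Rabs_right; try lra.
have : (1 - t) * norm (vsub x c) <= (1 - t) * d by apply: Rmult_le_compat_l; lra.
have [->|Ht0] := Req_dec t 0; first lra.
have : t * norm (vsub y c) < t * d by apply: Rmult_lt_compat_l; lra.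
lra.
Qed.

End Euclid.

(** (e / (a + 1)) a <= e for a, e >= 0; this is how tolerances are chosen. *)
Lemma frac_bound a e : 0 <= a -> 0 <= e -> e / (a + 1) * a <= e.
Proof.
move=> Ha He; have -> : e / (a + 1) * a = e * (a / (a + 1)) by field; lra.
have : a / (a + 1) <= 1 by apply: (Rmult_le_reg_r (a + 1)); [lra | field_simplify; lra].
nra.
Qed.

(** The scalar inequality behind one gradient step: with s = 1/L^2 and
    N = |n|, U = |u|, W = |J u|, the quantity N^2 - 2 s U^2 + s^2 W^2 is at most
    (1 - c^2/L^2) N^2 whenever c N <= U and W <= L U. *)
Lemma descent_inequality c L N U W : 0 < c <= L -> 0 <= N -> c * N <= U -> 0 <= W <= L * U ->
  N * N - 2 * / (L * L) * (U * U) + / (L * L) * / (L * L) * (W * W) <= (1 - c * c / (L * L)) * (N * N).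
Proof.
move=> Hc HN HU HW.
have HL2 : 0 < L * L by nra.
set s := / (L * L).
have Hs : 0 < s by apply: Rinv_0_lt_compat.
have HsL : s * (L * L) = 1 by rewrite /s; field; lra.
have HW2 : s * s * (W * W) <= s * (U * U).
  have HWU : W * W <= L * L * (U * U) by nra.
  by have := Rmult_le_compat_l (s * s) _ _ ltac:(nra) HWU; nra.
have HcN : s * (c * c) * (N * N) <= s * (U * U).
  have HcN0 : 0 <= c * N by nra.
  have -> : s * (c * c) * (N * N) = s * ((c * N) * (c * N)) by ring.
  by apply: Rmult_le_compat_l; [lra | apply: Rmult_le_compat].
have -> : c * c / (L * L) = s * (c * c) by rewrite /s; field; lra.
nra.
Qed.

(** * Sequences, subsequences and compactness in R^k *)

Definition incr (phi : nat -> nat) : Prop := forall r, (phi r < phi (S r))%coq_nat.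

Lemma incr_ge phi : incr phi -> forall r, (r <= phi r)%coq_nat.
Proof. by move=> H; elim=> [|r IH]; [lia | have := H r; lia]. Qed.

Lemma incr_comp phi psi : incr phi -> incr psi -> incr (fun r => phi (psi r)).
Proof.
move=> Hphi Hpsi r.
have mono : forall a b, (a < b)%coq_nat -> (phi a < phi b)%coq_nat.
  move=> a b; elim: b => [|b IH] Hab; first lia.
  have := Hphi b; have [->|Hne] := Nat.eq_dec a b; first lia.
  by have := IH ltac:(lia); lia.
exact/mono/Hpsi.
Qed.

Lemma rconv_sub (u : nat -> R) l phi : incr phi -> rconv u l -> rconv (fun r => u (phi r)) l.
Proof.
move=> Hi H eps He; have [N HN] := H eps He; exists N => r Hr.
by apply: HN; have := incr_ge _ Hi r; lia.
Qed.

Lemma vconv_sub k (u : nat -> E k) l phi : incr phi -> vconv u l -> vconv (fun r => u (phi r)) l.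
Proof.
move=> Hi H eps He; have [N HN] := H eps He; exists N => r Hr.
by apply: HN; have := incr_ge _ Hi r; lia.
Qed.

Lemma inv_succ_pos (r : nat) : 0 < / (INR r + 1).
Proof. by apply: Rinv_0_lt_compat; have := pos_INR r; lra. Qed.

Lemma inv_succ_le1 (r : nat) : / (INR r + 1) <= 1.
Proof. by rewrite -Rinv_1; apply: Rinv_le_contravar; [lra | have := pos_INR r; lra]. Qed.

Lemma inv_succ_small eps : 0 < eps -> exists N, forall r, (N <= r)%coq_nat -> / (INR r + 1) < eps.
Proof.
move=> He; have [N [HN HN0]] := archimed_cor1 eps He; exists N => r Hr.
apply: Rle_lt_trans HN; have := le_INR _ _ Hr; have := lt_0_INR _ HN0.
by move=> ? ?; apply: Rinv_le_contravar; lra.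
Qed.

Lemma inv_succ_conv C psi : incr psi -> rconv (fun r => C * / (INR (psi r) + 1)) 0.
Proof.
move=> Hpsi eps He.
have [N HN] := inv_succ_small (eps / (Rabs C + 1)) ltac:(apply: Rdiv_lt_0_compat; have := Rabs_pos C; lra).
exists N => r Hr.
have Hr' := HN (psi r) ltac:(have := incr_ge _ Hpsi r; lia).
have Hpos := inv_succ_pos (psi r); have HC := Rabs_pos C.
rewrite Rminus_0_r Rabs_mult (Rabs_right (/ _)); last lra.
have : (Rabs C + 1) * / (INR (psi r) + 1) < eps.
  by move: Hr'; rewrite /Rdiv => Hr'; apply: (Rmult_lt_reg_r (/ (Rabs C + 1)));
    [apply: Rinv_0_lt_compat; lra | rewrite Rmult_comm -Rmult_assoc Rinv_l; lra].
nra.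
Qed.

Lemma vconv_dominated k (u : nat -> E k) l (a : nat -> R) :
  rconv a 0 -> (forall r, norm (vsub (u r) l) <= a r) -> vconv u l.
Proof.
move=> Ha Hu eps He; have [N HN] := Ha eps He; exists N => r Hr.
by have := HN r Hr; rewrite Rminus_0_r => /Rabs_def2 [H _]; have := Hu r; lra.
Qed.

Lemma max_nat_bound k (N : 'I_k -> nat) : exists M, forall i, (N i <= M)%coq_nat.
Proof. by exists (\max_(i < k) N i) => i; apply/leP; apply: leq_bigmax. Qed.

Lemma coord_conv k (u : nat -> E k) l : (forall i, rconv (fun r => u r i) (l i)) -> vconv u l.
Proof.
move=> H eps Heps.
have HK := sqrt_pos (dimR k).
set c := eps / (sqrt (dimR k) + 1).
have Hc : 0 < c by apply: Rdiv_lt_0_compat; lra.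
have [Nf HNf] : exists Nf : 'I_k -> nat, forall i r, (Nf i <= r)%coq_nat -> Rabs (u r i - l i) < c.
  have HN i := H i c Hc.
  exists (fun i => proj1_sig (constructive_indefinite_description _ (HN i))) => i.
  exact: (proj2_sig (constructive_indefinite_description _ (HN i))).
have [M HM] := max_nat_bound _ Nf.
exists M => r Hr.
apply: Rle_lt_trans (norm_coord_bound (vsub (u r) l) c _ _) _; first lra.
  by move=> i; apply/Rlt_le/HNf; have := HM i; lia.
rewrite /c; apply: (Rmult_lt_reg_r (sqrt (dimR k) + 1)); first lra.
by field_simplify; lra.
Qed.

Lemma bounded_real_subseq (v : nat -> R) B : (forall r, Rabs (v r) <= B) ->
  exists psi, incr psi /\ exists l, rconv (fun r => v (psi r)) l.
Proof.
move=> HB.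
have HB' r : -B <= v r <= B by have := HB r; rewrite /Rabs; case: Rcase_abs => ? ?; lra.
have [l Hl] := Bolzano_Weierstrass v (fun c => -B <= c <= B) (compact_P3 (-B) B) HB'.
have Hg N (j : nat) : exists p, (N <= p)%coq_nat /\ Rabs (v p - l) < / (INR j + 1).
  have Hpos := inv_succ_pos j.
  have [p [Hp1 Hp2]] := Hl (disc l (mkposreal _ Hpos)) N
    (ex_intro _ (mkposreal _ Hpos) (fun y H => H)).
  by exists p.
pose g N j := proj1_sig (constructive_indefinite_description _ (Hg N j)).
have Hgp N j : (N <= g N j)%coq_nat /\ Rabs (v (g N j) - l) < / (INR j + 1).
  exact: (proj2_sig (constructive_indefinite_description _ (Hg N j))).
pose psi := fix psi r := match r with O => g O O | S r' => g (S (psi r')) r end.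
exists psi; split; first by move=> r /=; have := (Hgp (S (psi r)) (S r)).1; lia.
exists l => eps He; have [N HN] := inv_succ_small _ He; exists N => r Hr.
apply: Rlt_trans (HN r Hr).
by case: r Hr => [|r] Hr /=; [exact: (Hgp O O).2 | exact: (Hgp _ _).2].
Qed.

(** Bolzano-Weierstrass in R^k, by extracting coordinate after coordinate. *)
Lemma bounded_subseq k (u : nat -> E k) B : (forall r, norm (u r) <= B) ->
  exists phi, incr phi /\ exists l, vconv (fun r => u (phi r)) l.
Proof.
move=> HB.
have Hcoords j : exists phi, incr phi /\
    forall i : 'I_k, (i < j)%coq_nat -> exists l, rconv (fun r => u (phi r) i) l.
  elim: j => [|j [phi [Hphi IH]]].
    by exists (fun r : nat => r); split => [r|i]; lia.
  have [Hjk|Hkj] := ltnP j k; last first.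
    exists phi; split => // i Hi; apply: IH.
    by have := ltn_ord i; move/ltP => ?; move/leP: Hkj => ?; lia.
  pose i0 : 'I_k := Ordinal Hjk.
  have [psi [Hpsi [l0 Hl0]]] := bounded_real_subseq (fun r => u (phi r) i0) B
    (fun r => Rle_trans _ _ _ (coord_le _ _) (HB _)).
  exists (fun r => phi (psi r)); split; first exact: incr_comp.
  move=> i Hi; have [Hij|Hij] := Nat.eq_dec i j.
    have -> : i = i0 by apply: val_inj.
    by exists l0.
  have [l Hl] := IH i ltac:(lia); exists l.
  exact: (rconv_sub (fun r => u (phi r) i)).
have [phi [Hphi Hc]] := Hcoords k.
have {}Hc (i : 'I_k) : exists l, rconv (fun r => u (phi r) i) l by apply/Hc/ltP.
exists phi; split => //.
exists (fun i => proj1_sig (constructive_indefinite_description _ (Hc i))).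
by apply: coord_conv => i; exact: (proj2_sig (constructive_indefinite_description _ (Hc i))).
Qed.

Lemma cauchy_conv k (u : nat -> E k) :
  (forall eps, 0 < eps -> exists N, forall p q, (N <= p)%coq_nat -> (N <= q)%coq_nat ->
     norm (vsub (u p) (u q)) < eps) -> exists l, vconv u l.
Proof.
move=> H.
have Hc i : { l | Un_cv (fun r => u r i) l }.
  apply: R_complete => eps He; have [N HN] := H eps He; exists N => p q Hp Hq.
  by apply: Rle_lt_trans (HN p q Hp Hq); exact: (coord_le (vsub (u p) (u q)) i).
exists (fun i => proj1_sig (Hc i)); apply: coord_conv => i eps He.
by have [N HN] := proj2_sig (Hc i) eps He; exists N => r Hr; exact: HN.
Qed.

Lemma lim_in_ball k (u : nat -> E k) v h c : vconv u v -> (forall r, norm (vsub (u r) h) <= c) ->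
  norm (vsub v h) <= c.
Proof.
move=> Hu Hc; apply: Rle_plus_epsilon => eps He.
have [N HN] := Hu eps He.
have := norm_tri v (u N) h; have := HN N (le_n N); rewrite norm_sub_sym.
by have := Hc N; lra.
Qed.

Lemma geometric_null C q : 0 <= q < 1 -> rconv (fun j => C * q ^ j) 0.
Proof.
move=> Hq eps He.
have HC := Rabs_pos C.
have [N HN] := pow_lt_1_zero q ltac:(rewrite Rabs_right; lra) (eps / (Rabs C + 1))
  ltac:(apply: Rdiv_lt_0_compat; lra).
exists N => j Hj; rewrite Rminus_0_r Rabs_mult.
have Hqj0 := Rabs_pos (q ^ j).
have := Rmult_lt_compat_l (Rabs C + 1) _ _ ltac:(lra) (HN j Hj).
have -> : (Rabs C + 1) * (eps / (Rabs C + 1)) = eps by field; lra.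
lra.
Qed.

Lemma geometric_cauchy k (u : nat -> E k) C q : 0 <= C -> 0 <= q < 1 ->
  (forall j, norm (vsub (u (S j)) (u j)) <= C * q ^ j) ->
  exists l, vconv u l /\ norm (vsub l (u O)) <= C / (1 - q).
Proof.
move=> HC Hq Hstep.
have Hq1 : 0 < 1 - q by lra.
have HC' : 0 <= C / (1 - q) by apply: Rmult_le_pos => //; exact/Rlt_le/Rinv_0_lt_compat.
have Htail j i : norm (vsub (u (j + i)%coq_nat) (u j)) <= C / (1 - q) * (q ^ j - q ^ (j + i)%coq_nat).
  elim: i => [|i IH]; first by rewrite Nat.add_0_r norm_sub_same; lra.
  rewrite Nat.add_succ_r; apply: Rle_trans (norm_tri _ (u (j + i)%coq_nat) _) _.
  have := Hstep (j + i)%coq_nat; rewrite /= => Hs.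
  have -> : C / (1 - q) * (q ^ j - q * q ^ (j + i)%coq_nat) =
    C / (1 - q) * (q ^ j - q ^ (j + i)%coq_nat) + C * q ^ (j + i)%coq_nat by field; lra.
  lra.
have Htail_le j p : (j <= p)%coq_nat -> norm (vsub (u p) (u j)) <= C / (1 - q) * q ^ j.
  move=> Hjp; have -> : p = (j + (p - j)%coq_nat)%coq_nat by lia.
  apply: Rle_trans (Htail j _) _; apply: Rmult_le_compat_l => //.
  by have := pow_le q (j + (p - j)%coq_nat)%coq_nat ltac:(lra); lra.
have [l Hl] : exists l, vconv u l.
  apply: cauchy_conv => eps He.
  have [N HN] := geometric_null (C / (1 - q)) q Hq (eps / 2) ltac:(lra).
  have HqN := HN N (le_n N); rewrite Rminus_0_r in HqN.
  exists N => p1 p2 Hp1 Hp2.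
  have := Htail_le N p1 Hp1; have := Htail_le N p2 Hp2; have := Rle_abs (C / (1 - q) * q ^ N).
  by have := norm_tri (u p1) (u N) (u p2); rewrite (norm_sub_sym (u N)); lra.
exists l; split => //; apply: (lim_in_ball _ u) => // j.
by have := Htail_le O j ltac:(lia); rewrite /= Rmult_1_r.
Qed.

(** * Projection onto a closed convex set *)

Section Projection.
Variables (m : nat) (D : E m -> Prop).

Lemma minimizing_sequence (z d0 : E m) : D d0 ->
  exists (delta : R) (ds : nat -> E m), (forall r, D (ds r)) /\
    (forall d, D d -> delta <= norm (vsub z d)) /\
    (forall r, norm (vsub z (ds r)) < delta + / (INR r + 1)).
Proof.
move=> Hd0.
pose S a := exists d, D d /\ a = - norm (vsub z d).
have HS : bound S by exists 0 => a [d [_ ->]]; have := norm_ge0 (vsub z d); lra.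
have [sup [Hub Hlub]] := completeness S HS (ex_intro _ _ (ex_intro _ d0 (conj Hd0 erefl))).
have Hinf d : D d -> - sup <= norm (vsub z d).
  by move=> Hd; have := Hub _ (ex_intro _ d (conj Hd erefl)); lra.
have Happ (r : nat) : exists d, D d /\ norm (vsub z d) < - sup + / (INR r + 1).
  apply: NNPP => Hn; have Hpos := inv_succ_pos r.
  have : sup <= sup - / (INR r + 1).
    apply: Hlub => a [d [Hd ->]].
    have [//|Hlt] := Rle_lt_dec (- norm (vsub z d)) (sup - / (INR r + 1)).
    by exfalso; apply: Hn; exists d; split => //; lra.
  lra.
exists (- sup), (fun r => proj1_sig (constructive_indefinite_description _ (Happ r))).
split; last split => //.
  by move=> r; exact: (proj2_sig (constructive_indefinite_description _ (Happ r))).1.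
by move=> r; exact: (proj2_sig (constructive_indefinite_description _ (Happ r))).2.
Qed.

Lemma nearest_point (z d0 : E m) : is_closed D -> D d0 ->
  exists p, D p /\ forall d, D d -> norm (vsub z p) <= norm (vsub z d).
Proof.
move=> Hcl Hd0.
have [delta [ds [HD [Hinf Happ]]]] := minimizing_sequence z d0 Hd0.
have Hbd r : norm (ds r) <= norm z + (delta + 1).
  have -> : ds r = vadd z (vscal (-1) (vsub z (ds r))) by vext.
  apply: Rle_trans (norm_add _ _) _; rewrite norm_scal Rabs_Ropp Rabs_R1 Rmult_1_l.
  by have := Happ r; have := inv_succ_le1 r; lra.
have [phi [Hphi [p Hp]]] := bounded_subseq _ ds _ Hbd.
exists p; split; first exact: (Hcl _ p (fun r => HD (phi r)) Hp).
move=> d Hd; apply: Rle_trans (Hinf d Hd).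
apply: Rle_plus_epsilon => eps He.
have [N1 HN1] := Hp (eps / 2) ltac:(lra).
have [N2 HN2] := inv_succ_small (eps / 2) ltac:(lra).
set r := Nat.max N1 N2.
have := HN1 r ltac:(lia); have := Happ (phi r).
have := HN2 (phi r) ltac:(have := incr_ge _ Hphi r; lia).
have := norm_tri z (ds (phi r)) p; rewrite (norm_sub_sym (ds (phi r)) p).
lra.
Qed.

Lemma nearest_point_normal (z p : E m) : is_convex D -> D p ->
  (forall d, D d -> norm (vsub z p) <= norm (vsub z d)) -> normal_cone D p (vsub z p).
Proof.
move=> Hcv Hp Hmin d Hd.
set a := dot (vsub z p) (vsub d p).
set b := dot (vsub d p) (vsub d p).
have Hb : 0 <= b := dot_ge0 (vsub d p).
have Hsmall t : 0 < t <= 1 -> 2 * a <= t * b.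
  move=> Ht.
  have Hdt := Hmin _ (Hcv d p t Hd Hp ltac:(lra)).
  have Hseg : vsub z (vadd (vscal t d) (vscal (1 - t) p)) = vsub (vsub z p) (vscal t (vsub d p))
    by vext.
  rewrite Hseg in Hdt.
  have := Rmult_le_compat _ _ _ _ (norm_ge0 _) (norm_ge0 _) Hdt Hdt.
  rewrite !norm_sq dot_expand -/a -/b => Hq.
  by apply: (Rmult_le_reg_l t); [lra | nra].
have [//|Ha] := Rle_lt_dec a 0.
set t := Rmin 1 (a / (b + 1)).
have Hab : 0 < a / (b + 1) by apply: Rdiv_lt_0_compat; lra.
have Ht : 0 < t <= 1 by split; [apply: Rmin_glb_lt; lra | apply: Rmin_l].
have Htb : t * b <= a / (b + 1) * b by apply: Rmult_le_compat_r => //; apply: Rmin_r.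
have : a / (b + 1) * b < a.
  have -> : a / (b + 1) * b = a * (b / (b + 1)) by field; lra.
  have : b / (b + 1) < 1 by apply: (Rmult_lt_reg_r (b + 1)); [lra | field_simplify; lra].
  nra.
by have := Hsmall t Ht; lra.
Qed.

End Projection.

Section Matrices.
Context {m n : nat}.
Implicit Types A B : mat m n.

Lemma mat_apply_scal A c h : mat_apply A (vscal c h) = vscal c (mat_apply A h).
Proof.
apply: functional_extensionality => i; rewrite /mat_apply /vscal -sum_scal.
by apply: eq_bigr => j _; ring.
Qed.

Lemma adj_scal A c y : mat_adjoint_apply A (vscal c y) = vscal c (mat_adjoint_apply A y).
Proof.
apply: functional_extensionality => j; rewrite /mat_adjoint_apply /vscal -sum_scal.
by apply: eq_bigr => i _; ring.
Qed.

Lemma adj_sub A y y' :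
  mat_adjoint_apply A (vsub y y') = vsub (mat_adjoint_apply A y) (mat_adjoint_apply A y').
Proof.
apply: functional_extensionality => j; rewrite /mat_adjoint_apply /vsub -sum_sub.
by apply: eq_bigr => i _; ring.
Qed.

Lemma adj_dot A h y : dot (mat_apply A h) y = dot h (mat_adjoint_apply A y).
Proof.
rewrite /dot /mat_apply /mat_adjoint_apply.
have -> : \big[Rplus/0]_(i < m) (\big[Rplus/0]_(j < n) (A i j * h j) * y i)
   = \big[Rplus/0]_(i < m) \big[Rplus/0]_(j < n) (A i j * h j * y i).
  by apply: eq_bigr => i _; rewrite Rmult_comm -sum_scal; apply: eq_bigr => j _; ring.
rewrite exchange_big /=; apply: eq_bigr => j _; rewrite -sum_scal.
by apply: eq_bigr => i _; ring.
Qed.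

Definition matsub A B : mat m n := fun i j => A i j - B i j.

Lemma matsub_apply A B h : mat_apply (matsub A B) h = vsub (mat_apply A h) (mat_apply B h).
Proof.
apply: functional_extensionality => i; rewrite /mat_apply /vsub /matsub -sum_sub.
by apply: eq_bigr => j _; ring.
Qed.

Lemma matsub_adj A B y :
  mat_adjoint_apply (matsub A B) y = vsub (mat_adjoint_apply A y) (mat_adjoint_apply B y).
Proof.
apply: functional_extensionality => j; rewrite /mat_adjoint_apply /vsub /matsub -sum_sub.
by apply: eq_bigr => i _; ring.
Qed.

Definition mx_const : R := sqrt (dimR m) * sqrt (dimR n).

Lemma mx_const_ge0 : 0 <= mx_const.
Proof. exact: Rmult_le_pos (sqrt_pos _) (sqrt_pos _). Qed.

Lemma mat_bound A M : 0 <= M -> (forall i j, Rabs (A i j) <= M) ->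
  forall h, norm (mat_apply A h) <= M * mx_const * norm h.
Proof.
move=> HM HA h.
have Hh := norm_ge0 h; have Hm := sqrt_pos (dimR m); have Hn := sqrt_pos (dimR n).
have Hrow i : Rabs (mat_apply A h i) <= M * sqrt (dimR n) * norm h.
  apply: Rle_trans (abs_dot_le (A i) h) _; apply: Rmult_le_compat_r => //.
  exact: norm_coord_bound.
apply: Rle_trans (norm_coord_bound _ _ _ Hrow) _; first by apply: Rmult_le_pos => //; nra.
by rewrite /mx_const; apply: Req_le; ring.
Qed.

Lemma adj_bound A M : 0 <= M -> (forall i j, Rabs (A i j) <= M) ->
  forall y, norm (mat_adjoint_apply A y) <= M * mx_const * norm y.
Proof.
move=> HM HA y.
have Hy := norm_ge0 y; have Hm := sqrt_pos (dimR m); have Hn := sqrt_pos (dimR n).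
have Hcol j : Rabs (mat_adjoint_apply A y j) <= M * sqrt (dimR m) * norm y.
  apply: Rle_trans (abs_dot_le (fun i => A i j) y) _; apply: Rmult_le_compat_r => //.
  exact: norm_coord_bound.
apply: Rle_trans (norm_coord_bound _ _ _ Hcol) _; first by apply: Rmult_le_pos => //; nra.
by rewrite /mx_const; apply: Req_le; ring.
Qed.

Definition mx_abs_sum A : R := \big[Rplus/0]_(i < m) \big[Rplus/0]_(j < n) Rabs (A i j).

Lemma mx_abs_sum_ge A i j : Rabs (A i j) <= mx_abs_sum A.
Proof.
apply: Rle_trans (sum_ge_term (fun i => \big[Rplus/0]_(j < n) Rabs (A i j)) i _).
  by apply: (sum_ge_term (fun j => Rabs (A i j))) => j'; exact: Rabs_pos.
by move=> i'; apply: sum_nonneg => j'; exact: Rabs_pos.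
Qed.

Lemma mx_abs_sum_ge0 A : 0 <= mx_abs_sum A.
Proof. by apply: sum_nonneg => i; apply: sum_nonneg => j; exact: Rabs_pos. Qed.

End Matrices.

Lemma common_radius (I : finType) k (Q : I -> E k -> Prop) (x : E k) :
  (forall i, exists d, 0 < d /\ forall y, norm (vsub y x) < d -> Q i y) ->
  exists d, 0 < d /\ forall y, norm (vsub y x) < d -> forall i, Q i y.
Proof.
move=> H.
pose dd i := proj1_sig (constructive_indefinite_description _ (H i)).
have Hdd i : 0 < dd i /\ forall y, norm (vsub y x) < dd i -> Q i y.
  exact: (proj2_sig (constructive_indefinite_description _ (H i))).
set S := \big[Rplus/0]_(i : I) / dd i.
have HS i : / dd i <= S.
  by apply: (sum_ge_term (fun i => / dd i)) => j; apply/Rlt_le/Rinv_0_lt_compat; exact: (Hdd j).1.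
have HS0 : 0 <= S by apply: sum_nonneg => j; apply/Rlt_le/Rinv_0_lt_compat; exact: (Hdd j).1.
exists (/ (S + 1)); split; first by apply: Rinv_0_lt_compat; lra.
move=> y Hy i; apply: (Hdd i).2; apply: (Rlt_le_trans _ _ _ Hy).
have Hp := (Hdd i).1; rewrite -(Rinv_inv (dd i)).
by apply: Rinv_le_contravar; [exact: Rinv_0_lt_compat | have := HS i; lra].
Qed.

(** An iteration scheme driving a nonnegative merit function f to zero. *)
Section Iteration.
Variables (k : nat) (T : E k -> E k) (f : E k -> R) (c : E k) (rho K q Lf : R).
Hypotheses (HK : 0 <= K) (Hq : 0 <= q < 1) (HLf : 0 <= Lf) (Hf0 : forall z, 0 <= f z).
Hypothesis Hf_lip : forall z y, norm (vsub z c) < rho -> norm (vsub y c) < rho ->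
  f z <= f y + Lf * norm (vsub z y).
Hypothesis Hmove : forall z, norm (vsub z c) < rho -> norm (vsub (T z) z) <= K * f z.
Hypothesis Hcontract : forall z, norm (vsub z c) < rho -> norm (vsub (T z) c) < rho ->
  f (T z) <= q * f z.

Lemma iterates_estimates z0 : norm (vsub z0 c) + K / (1 - q) * f z0 < rho -> forall j,
  norm (vsub (iter j T z0) z0) <= K / (1 - q) * f z0 * (1 - q ^ j) /\
  norm (vsub (iter j T z0) c) < rho /\ f (iter j T z0) <= q ^ j * f z0.
Proof.
move=> Hz0.
have Hq1 : 0 < 1 - q by lra.
set kap := K / (1 - q) in Hz0 *.
have Hkap : 0 <= kap by apply: Rmult_le_pos => //; exact/Rlt_le/Rinv_0_lt_compat.
have Hkf : 0 <= kap * f z0 := Rmult_le_pos _ _ Hkap (Hf0 z0).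
have HKk : K = kap * (1 - q) by rewrite /kap; field; lra.
have Hpow i : 0 <= q ^ i <= 1.
  by split; [apply: pow_le; lra | rewrite -(pow1 i); apply: pow_incr; lra].
have Hin w d : norm (vsub w z0) <= kap * f z0 * d -> 0 <= d <= 1 -> norm (vsub w c) < rho.
  by move=> Hw Hd; have := norm_tri w z0 c; nra.
elim=> [|j [IH1 [IH2 IH3]]].
  by rewrite /= norm_sub_same; split; [lra | split; [have := Hf0 z0; nra | lra]].
have [Hqj Hqj1] := (Hpow j, Hpow j.+1).
have Hstep : norm (vsub (iter j.+1 T z0) (iter j T z0)) <= kap * f z0 * (q ^ j - q ^ j.+1).
  apply: Rle_trans (Hmove _ IH2) _; rewrite /= HKk.
  by have := Rmult_le_compat_l _ _ _ (Rmult_le_pos _ _ Hkap (Rlt_le _ _ Hq1)) IH3; nra.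
have Hdist : norm (vsub (iter j.+1 T z0) z0) <= kap * f z0 * (1 - q ^ j.+1).
  by apply: Rle_trans (norm_tri _ (iter j T z0) _) _; lra.
have Hball1 : norm (vsub (iter j.+1 T z0) c) < rho by apply: (Hin _ (1 - q ^ j.+1)); lra.
split => //; split => //.
have -> : q ^ j.+1 = q * q ^ j by [].
have Hc : f (iter j.+1 T z0) <= q * f (iter j T z0) := Hcontract _ IH2 Hball1.
nra.
Qed.

Lemma zero_of_limit (u : nat -> E k) l (b : nat -> R) : vconv u l -> rconv b 0 ->
  norm (vsub l c) < rho -> (forall j, norm (vsub (u j) c) < rho) -> (forall j, f (u j) <= b j) ->
  f l = 0.
Proof.
move=> Hu Hb Hl Hball Hfb.
apply: Rle_antisym; last exact: Hf0.
apply: Rle_plus_epsilon => eps He; rewrite Rplus_0_l.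
have [N1 HN1] := Hu (eps / 2 / (Lf + 1)) ltac:(apply: Rdiv_lt_0_compat; lra).
have [N2 HN2] := Hb (eps / 2) ltac:(lra).
set j := Nat.max N1 N2.
have H1 := HN1 j ltac:(lia); have H2 := HN2 j ltac:(lia); rewrite Rminus_0_r in H2.
have Hlip := Hf_lip l (u j) Hl (Hball j); rewrite norm_sub_sym in Hlip.
have : Lf * norm (vsub (u j) l) <= eps / 2 / (Lf + 1) * Lf.
  by rewrite Rmult_comm; apply: Rmult_le_compat_r; lra.
have := frac_bound Lf (eps / 2) HLf ltac:(lra); have := Rle_abs (b j); have := Hfb j.
lra.
Qed.

Lemma iteration_reaches_zero z0 : norm (vsub z0 c) + K / (1 - q) * f z0 < rho ->
  exists w, f w = 0 /\ norm (vsub w z0) <= K / (1 - q) * f z0.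
Proof.
move=> Hz0.
have Hit := iterates_estimates z0 Hz0.
have Hsteps j : norm (vsub (iter j.+1 T z0) (iter j T z0)) <= K * f z0 * q ^ j.
  apply: Rle_trans (Hmove _ (Hit j).2.1) _.
  by have := Rmult_le_compat_l _ _ _ HK (Hit j).2.2; lra.
have [l [Hl Hl0]] := geometric_cauchy _ (fun j => iter j T z0) (K * f z0) q
  (Rmult_le_pos _ _ HK (Hf0 z0)) Hq Hsteps.
have Hdist : norm (vsub l z0) <= K / (1 - q) * f z0.
  by apply: Rle_trans Hl0 _; apply: Req_le; rewrite /=; field; lra.
exists l; split => //.
apply: (zero_of_limit _ _ (fun j => f z0 * q ^ j) Hl (geometric_null _ _ Hq)).
- by have := norm_tri l z0 c; lra.
- by move=> j; exact: (Hit j).2.1.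
- by move=> j; rewrite Rmult_comm; exact: (Hit j).2.2.
Qed.

End Iteration.

Lemma tangent_of_approx k (X : E k -> Prop) (x h : E k) c : 0 <= c ->
  (forall r : nat, exists w, X w /\
     norm (vsub w (vadd x (vscal (/ (INR r + 1)) h))) <= c * / (INR r + 1) * norm h) ->
  exists v, tangent_cone X x v /\ norm (vsub v h) <= c * norm h.
Proof.
move=> Hc Happ.
pose ws r := proj1_sig (constructive_indefinite_description _ (Happ r)).
have Hws r : X (ws r) /\
    norm (vsub (ws r) (vadd x (vscal (/ (INR r + 1)) h))) <= c * / (INR r + 1) * norm h.
  exact: (proj2_sig (constructive_indefinite_description _ (Happ r))).
have Hh := norm_ge0 h.
pose g r := vscal (INR r + 1) (vsub (ws r) x).
have Hgh r : norm (vsub (g r) h) <= c * norm h.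
  have Ht := inv_succ_pos r; have Hr := pos_INR r.
  have -> : vsub (g r) h = vscal (INR r + 1) (vsub (ws r) (vadd x (vscal (/ (INR r + 1)) h))).
    by apply: functional_extensionality => i; rewrite /g /vsub /vscal /vadd; field; lra.
  rewrite norm_scal Rabs_right; last lra.
  have := Rmult_le_compat_l (INR r + 1) _ _ ltac:(lra) (Hws r).2.
  by have -> : (INR r + 1) * (c * / (INR r + 1) * norm h) = c * norm h by field; lra.
have Hgb r : norm (g r) <= c * norm h + norm h.
  have -> : g r = vadd (vsub (g r) h) h by vext.
  by apply: Rle_trans (norm_add _ _) _; have := Hgh r; lra.
have [psi [Hpsi [v Hv]]] := bounded_subseq _ g _ Hgb.
exists v; split; last exact: (lim_in_ball _ (fun r => g (psi r)) v h _ Hv (fun r => Hgh (psi r))).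
exists (fun r => / (INR (psi r) + 1)), (fun r => ws (psi r)).
split; first by move=> r; exact: inv_succ_pos.
split.
  move=> eps He; have [N HN] := inv_succ_conv 1 psi Hpsi eps He.
  by exists N => r Hr; have := HN r Hr; rewrite Rmult_1_l.
split; first by move=> r; exact: (Hws _).1.
split.
  apply: (vconv_dominated _ _ _ _ (inv_succ_conv ((c + 1) * norm h) psi Hpsi)) => r.
  have Ht := inv_succ_pos (psi r).
  apply: Rle_trans (norm_tri _ (vadd x (vscal (/ (INR (psi r) + 1)) h)) _) _.
  have -> : vsub (vadd x (vscal (/ (INR (psi r) + 1)) h)) x = vscal (/ (INR (psi r) + 1)) h by vext.
  by rewrite norm_scal Rabs_right; [have := (Hws (psi r)).2; lra | lra].
have -> : (fun r => vscal (/ / (INR (psi r) + 1)) (vsub (ws (psi r)) x)) = (fun r => g (psi r)).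
  apply: functional_extensionality => r; rewrite Rinv_inv //.
exact: Hv.
Qed.

Lemma nearly_radial_of_nearly_convex k (X : E k -> Prop) xbar :
  X xbar -> nearly_convex X xbar -> nearly_radial X xbar.
Proof.
move=> HX HNC eps He; have [d [Hd H]] := HNC eps He; exists d; split => // x Hx Hxb.
by apply: H => //; rewrite norm_sub_same.
Qed.

Lemma normal_cone_limit m (D : E m -> Prop) (p y : nat -> E m) pl yl :
  vconv p pl -> vconv y yl -> (forall r, normal_cone D (p r) (y r)) -> normal_cone D pl yl.
Proof.
move=> Hp Hy Hn d Hd; apply: Rle_plus_epsilon => eps He; rewrite Rplus_0_l.
set a := norm (vsub d pl); set b := norm yl.
have Ha : 0 <= a := norm_ge0 _; have Hb : 0 <= b := norm_ge0 _.
have [N1 HN1] := Hy (Rmin 1 (eps / 2 / (a + 1)))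
  ltac:(apply: Rmin_glb_lt; [lra | apply: Rdiv_lt_0_compat; lra]).
have [N2 HN2] := Hp (eps / (2 * (b + 2))) ltac:(apply: Rdiv_lt_0_compat; lra).
set r := Nat.max N1 N2.
have H1 := HN1 r ltac:(lia); have H2 := HN2 r ltac:(lia).
have H1a := Rlt_le_trans _ _ _ H1 (Rmin_l _ _); have H1b := Rlt_le_trans _ _ _ H1 (Rmin_r _ _).
(* split <yl, d - pl> into three terms, the middle one nonpositive by assumption *)
have -> : dot yl (vsub d pl) = dot (vsub yl (y r)) (vsub d pl) + dot (y r) (vsub d (p r))
    + dot (y r) (vsub (p r) pl).
  by rewrite !dot_subl !dot_subr; ring.
have Hyr : norm (y r) <= b + 1.
  have -> : y r = vadd (vsub (y r) yl) yl by vext.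
  by apply: Rle_trans (norm_add _ _) _; rewrite -/b; lra.
have T1 : dot (vsub yl (y r)) (vsub d pl) <= eps / 2.
  apply: Rle_trans (dot_le _ _) _; rewrite norm_sub_sym -/a.
  apply: Rle_trans (frac_bound a (eps / 2) Ha ltac:(lra)).
  by apply: Rmult_le_compat_r; lra.
have T3 : dot (y r) (vsub (p r) pl) <= eps / 2.
  apply: Rle_trans (dot_le _ _) _.
  have : norm (y r) * norm (vsub (p r) pl) <= (b + 2) * (eps / (2 * (b + 2))).
    by apply: Rmult_le_compat; try apply: norm_ge0; lra.
  by have -> : (b + 2) * (eps / (2 * (b + 2))) = eps / 2 by field; lra.
by have := Hn r d Hd; lra.
Qed.

Section Amenable.
Variables (n m : nat) (X : E n -> Prop) (xbar : E n) (V : E n -> Prop)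
  (F : E n -> E m) (J : E n -> mat m n) (D : E m -> Prop).
Hypotheses (HX : X xbar) (HV : is_open V) (HVx : V xbar) (HC1 : C1_on_with V F J)
  (HDcl : is_closed D) (HDcv : is_convex D) (HXD : forall x, V x -> (X x <-> D (F x)))
  (HCQ : forall y, normal_cone D (F xbar) y -> mat_adjoint_apply (J xbar) y = (fun _ => 0) ->
     y = (fun _ => 0)).

Lemma D_Fxbar : D (F xbar).
Proof. exact/HXD. Qed.

Lemma J_near eps : 0 < eps -> exists d, 0 < d /\ forall z, norm (vsub z xbar) < d ->
  V z /\ forall i j, Rabs (J z i j - J xbar i j) <= eps.
Proof.
move=> He.
have [rV [HrV HballV]] := HV xbar HVx.
have [d [Hd Hent]] := common_radius ('I_m * 'I_n)%type n
  (fun p z => V z -> Rabs (J z p.1 p.2 - J xbar p.1 p.2) < eps) xbar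
  (fun p => let: ex_intro d (conj Hd Hz) := HC1.2 xbar HVx p.1 p.2 eps He in
            ex_intro _ d (conj Hd (fun z Hzd HVz => Hz z HVz Hzd))).
exists (Rmin rV d); split; first exact: Rmin_glb_lt.
move=> z Hz; have HVz := HballV z (Rlt_le_trans _ _ _ Hz (Rmin_l _ _)).
split=> // i j; apply: Rlt_le.
exact: (Hent z (Rlt_le_trans _ _ _ Hz (Rmin_r _ _)) (i, j) HVz).
Qed.

(** A bound for the operator norms of J z and its adjoint near xbar. *)
Definition Lop : R := (mx_abs_sum (J xbar) + 1) * (@mx_const m n).

Lemma Lop_ge0 : 0 <= Lop.
Proof. by apply: Rmult_le_pos; [have := mx_abs_sum_ge0 (J xbar); lra | exact: mx_const_ge0]. Qed.

Lemma J_op_bound : exists d, 0 < d /\ forall z, norm (vsub z xbar) < d -> V z /\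
  (forall h, norm (mat_apply (J z) h) <= Lop * norm h) /\
  (forall y, norm (mat_adjoint_apply (J z) y) <= Lop * norm y).
Proof.
have [d [Hd Hnear]] := J_near 1 ltac:(lra).
exists d; split => // z Hz; have [HVz Hent] := Hnear z Hz.
have HM : 0 <= mx_abs_sum (J xbar) + 1 by have := mx_abs_sum_ge0 (J xbar); lra.
have Hb i j : Rabs (J z i j) <= mx_abs_sum (J xbar) + 1.
  have := Rabs_triang (J z i j - J xbar i j) (J xbar i j).
  have -> : J z i j - J xbar i j + J xbar i j = J z i j by ring.
  by have := Hent i j; have := mx_abs_sum_ge (J xbar) i j; lra.
by split; [| split]; [| exact: mat_bound | exact: adj_bound].
Qed.

Lemma deriv_line x h s i : V (vadd x (vscal s h)) ->
  derivable_pt_lim (fun t => F (vadd x (vscal t h)) i) s (mat_apply (J (vadd x (vscal s h))) h i).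
Proof.
move=> Hz eps He.
set z := vadd x (vscal s h) in Hz *.
have Hh := norm_ge0 h.
set e' := eps / 2 / (norm h + 1).
have He' : 0 < e' by apply: Rdiv_lt_0_compat; lra.
have He'h : e' * norm h < eps.
  by have := frac_bound (norm h) (eps / 2) Hh ltac:(lra); rewrite /e'; lra.
have [d [Hd Hdiff]] := HC1.1 z Hz e' He'.
have Hdel : 0 < d / (norm h + 1) by apply: Rdiv_lt_0_compat; lra.
exists (mkposreal _ Hdel) => t Ht0 /= Ht.
have Hpt : vsub (vadd x (vscal (s + t) h)) z = vscal t h by rewrite /z; vext.
have Htpos : 0 < Rabs t by apply: Rabs_pos_lt.
have Hnear : norm (vsub (vadd x (vscal (s + t) h)) z) < d.
  rewrite Hpt norm_scal.
  have : Rabs t * (norm h + 1) < d.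
    have := Rmult_lt_compat_r (norm h + 1) _ _ ltac:(lra) Ht.
    by have -> : d / (norm h + 1) * (norm h + 1) = d by field; lra.
  nra.
have Hcoord := Rle_trans _ _ _ (coord_le _ i) (Hdiff _ Hnear).
rewrite Hpt mat_apply_scal norm_scal in Hcoord.
have Hcoord' : Rabs (F (vadd x (vscal (s + t) h)) i - F z i - t * mat_apply (J z) h i)
  <= e' * (Rabs t * norm h) := Hcoord.
have -> : (F (vadd x (vscal (s + t) h)) i - F z i) / t - mat_apply (J z) h i
   = (F (vadd x (vscal (s + t) h)) i - F z i - t * mat_apply (J z) h i) / t by field.
rewrite /Rdiv Rabs_mult Rabs_inv.
apply: (Rmult_lt_reg_r (Rabs t)) => //.
rewrite Rmult_assoc Rinv_l; last lra.
nra.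
Qed.

(** Uniform strict differentiability of F near xbar, from the mean value
    theorem on each coordinate and the continuity of J. *)
Lemma strict_diff eps : 0 < eps -> exists d, 0 < d /\ forall x y,
  norm (vsub x xbar) < d -> norm (vsub y xbar) < d ->
  norm (vsub (vsub (F y) (F x)) (mat_apply (J x) (vsub y x))) <= eps * norm (vsub y x).
Proof.
move=> He.
set K0 := @mx_const m n * sqrt (dimR m).
have HK0 : 0 <= K0 := Rmult_le_pos _ _ mx_const_ge0 (sqrt_pos _).
set eta := eps / 2 / (K0 + 1).
have Heta : 0 < eta by apply: Rdiv_lt_0_compat; lra.
have [d [Hd Hnear]] := J_near eta Heta.
exists d; split => // x y Hx Hy.
set h := vsub y x.
have Hh := norm_ge0 h.
have Hseg t : 0 <= t <= 1 -> norm (vsub (vadd x (vscal t h)) xbar) < d by exact: segment_in_ball.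
have Hcoord i : Rabs (vsub (vsub (F y) (F x)) (mat_apply (J x) h) i)
    <= 2 * eta * @mx_const m n * norm h.
  have [c [Hc1 Hc2]] := MVT_cor2 (fun t => F (vadd x (vscal t h)) i)
     (fun t => mat_apply (J (vadd x (vscal t h))) h i) 0 1 Rlt_0_1
     (fun t Ht => deriv_line x h t i (Hnear _ (Hseg t Ht)).1).
  have Hx0 : vadd x (vscal 0 h) = x by rewrite /h; vext.
  have Hy1 : vadd x (vscal 1 h) = y by rewrite /h; vext.
  rewrite /= Hx0 Hy1 Rminus_0_r Rmult_1_r in Hc1.
  set zc := vadd x (vscal c h) in Hc1.
  have -> : vsub (vsub (F y) (F x)) (mat_apply (J x) h) i = mat_apply (matsub (J zc) (J x)) h i.
    by rewrite matsub_apply /vsub Hc1.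
  apply: Rle_trans (coord_le _ i) _; apply: mat_bound; first lra.
  move=> i' j'; rewrite /matsub.
  have [_ H1] := Hnear zc (Hseg c ltac:(lra)); have [_ H2] := Hnear x Hx.
  have -> : J zc i' j' - J x i' j' = (J zc i' j' - J xbar i' j') - (J x i' j' - J xbar i' j') by ring.
  apply: Rle_trans (Rabs_triang _ _) _; rewrite Rabs_Ropp.
  by have := H1 i' j'; have := H2 i' j'; lra.
apply: Rle_trans (norm_coord_bound _ _ _ Hcoord) _.
  by apply: Rmult_le_pos => //; apply: Rmult_le_pos; [lra | exact: mx_const_ge0].
have -> : 2 * eta * @mx_const m n * norm h * sqrt (dimR m) = eps / 2 / (K0 + 1) * K0 * 2 * norm h.
  by rewrite /eta /K0; ring.
by have := frac_bound K0 (eps / 2) HK0 ltac:(lra); nra.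
Qed.

Lemma F_lipschitz : exists d, 0 < d /\ forall x y,
  norm (vsub x xbar) < d -> norm (vsub y xbar) < d ->
  norm (vsub (F y) (F x)) <= (Lop + 1) * norm (vsub y x).
Proof.
have [d1 [Hd1 Hsd]] := strict_diff 1 ltac:(lra).
have [d2 [Hd2 Hop]] := J_op_bound.
exists (Rmin d1 d2); split; first exact: Rmin_glb_lt.
move=> x y Hx Hy.
have Hx1 := Rlt_le_trans _ _ _ Hx (Rmin_l _ _); have Hx2 := Rlt_le_trans _ _ _ Hx (Rmin_r _ _).
have Hy1 := Rlt_le_trans _ _ _ Hy (Rmin_l _ _).
have -> : vsub (F y) (F x) = vadd (vsub (vsub (F y) (F x)) (mat_apply (J x) (vsub y x)))
  (mat_apply (J x) (vsub y x)) by vext.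
apply: Rle_trans (norm_add _ _) _.
by have := Hsd x y Hx1 Hy1; have := (Hop x Hx2).2.1 (vsub y x); lra.
Qed.

Lemma adjoint_limit (z : nat -> E n) (y : nat -> E m) w (a : nat -> R) :
  vconv z xbar -> vconv y w -> rconv a 0 -> (forall r, norm (y r) = 1) ->
  (forall r, norm (mat_adjoint_apply (J (z r)) (y r)) <= a r) ->
  mat_adjoint_apply (J xbar) w = (fun _ => 0).
Proof.
move=> Hz Hy Ha Hy1 Hadj.
apply: norm_eq0; apply: Rle_antisym; last exact: norm_ge0.
apply: Rle_plus_epsilon => eps He; rewrite Rplus_0_l.
have Hk := @mx_const_ge0 m n; set kap := @mx_const m n in Hk *.
have HM := mx_abs_sum_ge0 (J xbar); set M := mx_abs_sum (J xbar) in HM *.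
have HMk : 0 <= M * kap by nra.
have [dJ [HdJ Hnear]] := J_near (eps / 3 / (kap + 1)) ltac:(apply: Rdiv_lt_0_compat; lra).
have [N1 HN1] := Hy (eps / 3 / (M * kap + 1)) ltac:(apply: Rdiv_lt_0_compat; lra).
have [N2 HN2] := Hz dJ HdJ.
have [N3 HN3] := Ha (eps / 3) ltac:(lra).
set r := Nat.max N1 (Nat.max N2 N3).
have H1 := HN1 r ltac:(lia); have [_ H2] := Hnear _ (HN2 r ltac:(lia)).
have H3 := HN3 r ltac:(lia); rewrite Rminus_0_r in H3.
have -> : mat_adjoint_apply (J xbar) w =
    vadd (mat_adjoint_apply (J xbar) (vsub w (y r)))
      (vadd (mat_adjoint_apply (matsub (J xbar) (J (z r))) (y r))
            (mat_adjoint_apply (J (z r)) (y r))).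
  by rewrite adj_sub matsub_adj; vext.
apply: Rle_trans (norm_add _ _) _; apply: Rle_trans (Rplus_le_compat_l _ _ _ (norm_add _ _)) _.
have B1 := adj_bound (J xbar) M HM (mx_abs_sum_ge _) (vsub w (y r)).
have B2 := adj_bound (matsub (J xbar) (J (z r))) (eps / 3 / (kap + 1))
  ltac:(apply: Rlt_le; apply: Rdiv_lt_0_compat; lra)
  (fun i j => ltac:(rewrite /matsub Rabs_minus_sym; exact: H2)) (y r).
rewrite norm_sub_sym -/kap in B1; rewrite Hy1 Rmult_1_r -/kap in B2.
have B1' : M * kap * norm (vsub (y r) w) <= eps / 3.
  apply: Rle_trans (frac_bound (M * kap) (eps / 3) HMk ltac:(lra)).
  by rewrite (Rmult_comm (eps / 3 / _)); apply: Rmult_le_compat_l; lra.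
have := frac_bound kap (eps / 3) Hk ltac:(lra); have := Rle_trans _ _ _ (Hadj r) (Rle_abs _).
lra.
Qed.

(** Unit normals at points tending to F xbar cannot be asymptotically
    annihilated by the adjoint Jacobians: a limit of them would be a nonzero
    normal to D at F xbar in the kernel of the adjoint of J xbar. *)
Lemma no_degenerate_normals (z : nat -> E n) (p y : nat -> E m) (a : nat -> R) :
  vconv z xbar -> vconv p (F xbar) -> rconv a 0 ->
  (forall r, normal_cone D (p r) (y r)) -> (forall r, norm (y r) = 1) ->
  (forall r, norm (mat_adjoint_apply (J (z r)) (y r)) <= a r) -> False.
Proof.
move=> Hz Hp Ha Hn Hy1 Hadj.
have [phi [Hphi [w Hw]]] := bounded_subseq _ y 1 (fun r => Req_le _ _ (Hy1 r)).
have Hwn : normal_cone D (F xbar) w.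
  exact: (normal_cone_limit _ D _ _ _ _ (vconv_sub _ _ _ _ Hphi Hp) Hw (fun r => Hn (phi r))).
have Hwa : mat_adjoint_apply (J xbar) w = (fun _ => 0).
  exact: (adjoint_limit (fun r => z (phi r)) (fun r => y (phi r)) w (fun r => a (phi r))
    (vconv_sub _ _ _ _ Hphi Hz) Hw (rconv_sub _ _ _ Hphi Ha) (fun r => Hy1 (phi r))
    (fun r => Hadj (phi r))).
have Hw_half : 1 / 2 <= norm w.
  have [N HN] := Hw (1 / 2) ltac:(lra).
  have Hsplit := norm_add (vsub (y (phi N)) w) w.
  have Hsum : vadd (vsub (y (phi N)) w) w = y (phi N) by vext.
  rewrite Hsum Hy1 in Hsplit.
  by have := HN N (le_n N); lra.
by have := HCQ w Hwn Hwa; move=> Hw0; rewrite Hw0 norm_zero in Hw_half; lra.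
Qed.

Lemma uniform_qualification : exists c d, 0 < c /\ 0 < d /\ forall z p y,
  norm (vsub z xbar) < d -> norm (vsub p (F xbar)) < d -> normal_cone D p y ->
  c * norm y <= norm (mat_adjoint_apply (J z) y).
Proof.
apply: NNPP => Hn.
pose bad (r : nat) (t : E n * E m * E m) :=
  norm (vsub t.1.1 xbar) < / (INR r + 1) /\ norm (vsub t.1.2 (F xbar)) < / (INR r + 1) /\
  normal_cone D t.1.2 t.2 /\ norm t.2 = 1 /\
  norm (mat_adjoint_apply (J t.1.1) t.2) < / (INR r + 1).
have Hbad r : exists t, bad r t.
  apply: NNPP => Hr; apply: Hn.
  have Hpos := inv_succ_pos r.
  exists (/ (INR r + 1)), (/ (INR r + 1)); do 2 split => //.
  move=> z p y Hz Hpf Hy; apply: Rnot_lt_le => Hlt.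
  have Hy0 : 0 < norm y by have := norm_ge0 (mat_adjoint_apply (J z) y); have := norm_ge0 y; nra.
  have Hiy : 0 < / norm y by apply: Rinv_0_lt_compat.
  apply: Hr; exists (z, p, vscal (/ norm y) y); rewrite /bad /=.
  do 2 (split => //); split.
    by move=> d Hd; rewrite dot_scall; have := Hy d Hd; nra.
  split; first by rewrite norm_scal Rabs_right; [field | ]; lra.
  rewrite adj_scal norm_scal Rabs_right; last lra.
  apply: (Rmult_lt_reg_l (norm y)) => //.
  by rewrite -Rmult_assoc Rinv_r; lra.
pose t r := proj1_sig (constructive_indefinite_description _ (Hbad r)).
have Ht r : bad r (t r) := proj2_sig (constructive_indefinite_description _ (Hbad r)).
have Hnull := inv_succ_conv 1 (fun r => r) ltac:(move=> r; lia).
apply: (no_degenerate_normals (fun r => (t r).1.1) (fun r => (t r).1.2) (fun r => (t r).2)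
  (fun r => 1 * / (INR r + 1))) => //.
- apply: (vconv_dominated _ _ _ _ Hnull) => r.
  by have [H _] := Ht r; rewrite Rmult_1_l; lra.
- apply: (vconv_dominated _ _ _ _ Hnull) => r.
  by have [_ [H _]] := Ht r; rewrite Rmult_1_l; lra.
- by move=> r; have [_ [_ [H _]]] := Ht r.
- by move=> r; have [_ [_ [_ [H _]]]] := Ht r.
- by move=> r; have [_ [_ [_ [_ H]]]] := Ht r; rewrite Rmult_1_l; lra.
Qed.

(** * The error bound *)

(** A nearest point of D to w; D is nonempty since it contains F xbar. *)
Definition proj_D (w : E m) : E m :=
  proj1_sig (constructive_indefinite_description _ (nearest_point m D w (F xbar) HDcl D_Fxbar)).

Lemma proj_D_spec w : D (proj_D w) /\ forall d, D d -> norm (vsub w (proj_D w)) <= norm (vsub w d).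
Proof. exact: (proj2_sig (constructive_indefinite_description _ (nearest_point m D w (F xbar) HDcl D_Fxbar))). Qed.

Definition residual (z : E n) : R := norm (vsub (F z) (proj_D (F z))).

Lemma residual_ge0 z : 0 <= residual z.
Proof. exact: norm_ge0. Qed.

Lemma residual_le z d : D d -> residual z <= norm (vsub (F z) d).
Proof. exact: (proj_D_spec (F z)).2. Qed.

Lemma residual_lip z y : residual z <= residual y + norm (vsub (F z) (F y)).
Proof.
apply: Rle_trans (residual_le z _ (proj_D_spec (F y)).1) _.
by have := norm_tri (F z) (F y) (proj_D (F y)); rewrite /residual; lra.
Qed.

Lemma residual_xbar : residual xbar = 0.
Proof.
apply: Rle_antisym; last exact: residual_ge0.
by have := residual_le xbar _ D_Fxbar; rewrite norm_sub_same.
Qed.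

Lemma residual_zero z : V z -> residual z = 0 -> X z.
Proof.
move=> HVz H0; apply/HXD => //.
have -> : F z = proj_D (F z).
  apply: functional_extensionality => i.
  by have := f_equal (fun v => v i) (norm_eq0 _ H0); rewrite /vsub /=; lra.
exact: (proj_D_spec _).1.
Qed.

Definition grad_step (s : R) (z : E n) : E n :=
  vsub z (vscal s (mat_adjoint_apply (J z) (vsub (F z) (proj_D (F z))))).

Lemma step_decrease z c L eps1 : 0 < c <= L -> 0 <= eps1 ->
  c * residual z <= norm (mat_adjoint_apply (J z) (vsub (F z) (proj_D (F z)))) ->
  (forall h, norm (mat_apply (J z) h) <= L * norm h) ->
  norm (mat_adjoint_apply (J z) (vsub (F z) (proj_D (F z)))) <= L * residual z ->
  norm (vsub (vsub (F (grad_step (/ (L * L)) z)) (F z))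
             (mat_apply (J z) (vsub (grad_step (/ (L * L)) z) z)))
    <= eps1 * norm (vsub (grad_step (/ (L * L)) z) z) ->
  residual (grad_step (/ (L * L)) z) <= (1 - c * c / (L * L) / 2 + eps1 / L) * residual z.
Proof.
move=> Hc He1 Hqual HJ HJadj Hlin.
have HL : 0 < L by lra.
set s := / (L * L) in Hlin *; set z' := grad_step s z in Hlin *.
set p := proj_D (F z) in Hqual HJadj *; set nn := vsub (F z) p in Hqual HJadj *.
set u := mat_adjoint_apply (J z) nn in Hqual HJadj *.
have Hs : 0 < s by apply/Rinv_0_lt_compat; nra.
have HN : residual z = norm nn by [].
rewrite HN in Hqual HJadj *.
have Hdz : vsub z' z = vscal (- s) u by rewrite /z' /grad_step -/p -/nn -/u; vext.
have Hnz : norm (vsub z' z) = s * norm u by rewrite Hdz norm_scal Rabs_Ropp Rabs_right; lra.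
have Ha : c * c / (L * L) <= 1.
  by apply: (Rmult_le_reg_r (L * L)); [nra | field_simplify; nra].
have Ha0 : 0 <= c * c / (L * L) by apply: Rmult_le_pos; [nra | apply/Rlt_le/Rinv_0_lt_compat; nra].
have Hmain : norm (vsub nn (vscal s (mat_apply (J z) u))) <= (1 - c * c / (L * L) / 2) * norm nn.
  apply: Rsqr_incr_0_var; last by have := norm_ge0 nn; nra.
  rewrite /Rsqr norm_sq dot_expand (dot_comm nn) adj_dot -/u -!(norm_sq).
  apply: Rle_trans (descent_inequality c L _ _ _ Hc (norm_ge0 _) Hqual
    (conj (norm_ge0 _) (HJ u))) _.
  by have := norm_ge0 nn; nra.
have Hid : vsub (F z') p = vadd (vsub nn (vscal s (mat_apply (J z) u)))
    (vsub (vsub (F z') (F z)) (mat_apply (J z) (vsub z' z))).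
  by rewrite Hdz mat_apply_scal /nn; vext.
have Herr : eps1 * norm (vsub z' z) <= eps1 / L * norm nn.
  rewrite Hnz; have -> : eps1 / L * norm nn = eps1 * s * (L * norm nn) by rewrite /s; field; lra.
  by have := Rmult_le_compat_l (eps1 * s) _ _ ltac:(nra) HJadj; lra.
apply: Rle_trans (residual_le z' p (proj_D_spec (F z)).1) _.
rewrite Hid; apply: Rle_trans (norm_add _ _) _.
lra.
Qed.

(** Near xbar, the adjoint Jacobian applied to the residual vector
    F z - proj_D (F z), a normal to D, has length comparable to the residual. *)
Lemma adjoint_residual_bounds : exists c d, 0 < c /\ 0 < d /\ forall z, norm (vsub z xbar) < d ->
  V z /\ (forall h, norm (mat_apply (J z) h) <= Lop * norm h) /\
  c * residual z <= norm (mat_adjoint_apply (J z) (vsub (F z) (proj_D (F z)))) <= Lop * residual z.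
Proof.
have [c [dc [Hc [Hdc Hqual]]]] := uniform_qualification.
have [dJ [HdJ Hop]] := J_op_bound.
have [dL [HdL Hlip]] := F_lipschitz.
have HLop := Lop_ge0.
set dc' := dc / (2 * (Lop + 1) + 1).
have Hdc' : 0 < dc' by apply: Rdiv_lt_0_compat; lra.
have Hdc'_le : (2 * (Lop + 1) + 1) * dc' = dc by rewrite /dc'; field; lra.
exists c, (Rmin (Rmin dJ dL) dc'); split => //; split; first by repeat apply: Rmin_glb_lt.
move=> z /Rmin_Rgt [/Rmin_Rgt [HzJ HzL] Hzc].
have [HVz [HJ HJadj]] := Hop z HzJ.
split => //; split => //; split; last first.
  by have := HJadj (vsub (F z) (proj_D (F z))); rewrite -/(residual z).
have [HpD Hpmin] := proj_D_spec (F z).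
apply: Hqual; [nra | | exact: nearest_point_normal].
have Htri := norm_tri (proj_D (F z)) (F z) (F xbar).
have Hres : norm (vsub (proj_D (F z)) (F z)) = residual z by rewrite norm_sub_sym.
rewrite Hres in Htri.
have := residual_le z _ D_Fxbar; have := Hlip xbar z ltac:(rewrite norm_sub_same; lra) HzL.
have : (Lop + 1) * norm (vsub z xbar) <= (Lop + 1) * dc' by apply: Rmult_le_compat_l; lra.
lra.
Qed.

Lemma gradient_step_estimates : exists rho s K q, 0 < rho /\ 0 <= K /\ 0 <= q < 1 /\
  (forall z, norm (vsub z xbar) < rho -> V z) /\
  (forall z, norm (vsub z xbar) < rho -> norm (vsub (grad_step s z) z) <= K * residual z) /\
  (forall z, norm (vsub z xbar) < rho -> norm (vsub (grad_step s z) xbar) < rho ->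
     residual (grad_step s z) <= q * residual z).
Proof.
have [c [dc [Hc [Hdc Hbounds]]]] := adjoint_residual_bounds.
have HLop := Lop_ge0.
set L := Lop + c.
have HcL : 0 < c <= L by rewrite /L; lra.
have HL2 : 0 < L * L by nra.
set a := c * c / (L * L).
have Ha : 0 < a <= 1.
  split; first by apply: Rdiv_lt_0_compat; nra.
  by apply: (Rmult_le_reg_r (L * L)); [nra | rewrite /a; field_simplify; nra].
set eps1 := a * L / 4.
have He1 : 0 < eps1 by rewrite /eps1; nra.
have [dU [HdU Hsd]] := strict_diff eps1 He1.
have Hrho := Rmin_glb_lt _ _ _ Hdc HdU.
exists (Rmin dc dU), (/ (L * L)), (/ L), (1 - a / 4).
split => //; split; first by apply/Rlt_le/Rinv_0_lt_compat; lra.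
split; first lra.
split; last split.
- by move=> z /Rmin_Rgt [Hz _]; exact: (Hbounds z Hz).1.
- move=> z /Rmin_Rgt [Hz _]; have [_ [_ [_ H]]] := Hbounds z Hz.
  have -> : vsub (grad_step (/ (L * L)) z) z =
      vscal (- / (L * L)) (mat_adjoint_apply (J z) (vsub (F z) (proj_D (F z)))).
    by rewrite /grad_step; vext.
  rewrite norm_scal Rabs_Ropp Rabs_right; last by apply/Rle_ge/Rlt_le/Rinv_0_lt_compat.
  have HLr : Lop * residual z <= L * residual z.
    by apply: Rmult_le_compat_r; [exact: residual_ge0 | rewrite /L; lra].
  have := Rmult_le_compat_l (/ (L * L)) _ _ ltac:(exact/Rlt_le/Rinv_0_lt_compat)
    (Rle_trans _ _ _ H HLr).
  by have -> : / (L * L) * (L * residual z) = / L * residual z by field; lra.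
- move=> z /Rmin_Rgt [Hzc HzU] /Rmin_Rgt [_ Hz'U].
  have [_ [HJ [Hq1 Hq2]]] := Hbounds z Hzc.
  have HJL h : norm (mat_apply (J z) h) <= L * norm h.
    apply: Rle_trans (HJ h) _.
    by apply: Rmult_le_compat_r; [exact: norm_ge0 | rewrite /L; lra].
  have Hq2L : norm (mat_adjoint_apply (J z) (vsub (F z) (proj_D (F z)))) <= L * residual z.
    by apply: Rle_trans Hq2 _; apply: Rmult_le_compat_r; [exact: residual_ge0 | rewrite /L; lra].
  have := step_decrease z c L eps1 HcL ltac:(lra) Hq1 HJL Hq2L (Hsd z _ HzU Hz'U).
  by have -> : 1 - c * c / (L * L) / 2 + eps1 / L = 1 - a / 4 by rewrite /eps1 /a; field; lra.
Qed.

Lemma residual_lipschitz : exists d, 0 < d /\ forall z y,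
  norm (vsub z xbar) < d -> norm (vsub y xbar) < d ->
  residual z <= residual y + (Lop + 1) * norm (vsub z y).
Proof.
have [d [Hd Hlip]] := F_lipschitz.
exists d; split => // z y Hz Hy; apply: Rle_trans (residual_lip z y) _.
by have := Hlip y z Hy Hz; lra.
Qed.

(** Error bound (metric regularity of X at xbar): near xbar, the distance to X
    is at most a constant times the residual dist(F z, D).  The point of X is
    produced by iterating the gradient step. *)
Lemma error_bound : exists kappa d, 0 <= kappa /\ 0 < d /\ forall z, norm (vsub z xbar) < d ->
  exists w, X w /\ norm (vsub w z) <= kappa * residual z.
Proof.
have [rho0 [s [K [q [Hrho0 [HK [Hq [HVrho [Hmove Hcontract]]]]]]]]] := gradient_step_estimates.
have [dL [HdL Hlip]] := residual_lipschitz.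
set rho := Rmin rho0 dL.
have Hrho : 0 < rho := Rmin_glb_lt _ _ _ Hrho0 HdL.
have Hball z : norm (vsub z xbar) < rho -> norm (vsub z xbar) < rho0 /\ norm (vsub z xbar) < dL.
  by move=> /Rmin_Rgt.
have HLf : 0 <= Lop + 1 by have := Lop_ge0; lra.
set kappa := K / (1 - q).
have Hk : 0 <= kappa by apply: Rmult_le_pos => //; apply/Rlt_le/Rinv_0_lt_compat; lra.
have HkL : 0 <= kappa * (Lop + 1) := Rmult_le_pos _ _ Hk HLf.
have Hden : 0 < 1 + kappa * (Lop + 1) by lra.
exists kappa, (rho / (1 + kappa * (Lop + 1))); split => //; split; first exact: Rdiv_lt_0_compat.
move=> z Hz.
have Hz_rho : norm (vsub z xbar) * (1 + kappa * (Lop + 1)) < rho.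
  have := Rmult_lt_compat_r _ _ _ Hden Hz.
  by have -> : rho / (1 + kappa * (Lop + 1)) * (1 + kappa * (Lop + 1)) = rho by field; lra.
have Hzb : norm (vsub z xbar) < rho.
  by have := Rmult_le_pos _ _ (norm_ge0 (vsub z xbar)) HkL; nra.
have Hres : residual z <= (Lop + 1) * norm (vsub z xbar).
  have := Hlip z xbar (Hball z Hzb).2 ltac:(rewrite norm_sub_same; lra).
  by rewrite residual_xbar; lra.
have Hstart : norm (vsub z xbar) + kappa * residual z < rho.
  by have := Rmult_le_compat_l _ _ _ Hk Hres; nra.
have [w [Hw0 Hwz]] := iteration_reaches_zero n (grad_step s) residual xbar rho K q (Lop + 1)
  HK Hq HLf residual_ge0
  (fun z y Hz Hy => Hlip z y (Hball z Hz).2 (Hball y Hy).2)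
  (fun z Hz => Hmove z (Hball z Hz).1)
  (fun z Hz Hz' => Hcontract z (Hball z Hz).1 (Hball _ Hz').1) z Hstart.
rewrite -/kappa in Hwz.
exists w; split => //; apply: residual_zero Hw0; apply: HVrho; apply: (Hball w _).1.
by have := norm_tri w z xbar; lra.
Qed.

(** Along a segment between points of X near xbar the residual is small:
    F(x + t h) is compared with t F y + (1 - t) F x, a point of the convex set D. *)
Lemma residual_segment eps : 0 < eps -> exists d, 0 < d /\ forall x y t,
  norm (vsub x xbar) < d -> norm (vsub y xbar) < d -> X x -> X y -> 0 <= t <= 1 ->
  residual (vadd x (vscal t (vsub y x))) <= 2 * eps * t * norm (vsub y x).
Proof.
move=> He.
have [dU [HdU Hsd]] := strict_diff eps He.
have [dV [HdV HballV]] := HV xbar HVx.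
exists (Rmin dU dV); split; first exact: Rmin_glb_lt.
move=> x y t Hx Hy HXx HXy Ht.
have Hx1 := Rlt_le_trans _ _ _ Hx (Rmin_l _ _); have Hy1 := Rlt_le_trans _ _ _ Hy (Rmin_l _ _).
have HDx : D (F x) by apply/HXD => //; apply: HballV; exact: Rlt_le_trans Hx (Rmin_r _ _).
have HDy : D (F y) by apply/HXD => //; apply: HballV; exact: Rlt_le_trans Hy (Rmin_r _ _).
set h := vsub y x in Hsd *.
set z := vadd x (vscal t h).
have Hzx : vsub z x = vscal t h by rewrite /z; vext.
have Hnzx : norm (vsub z x) = t * norm h by rewrite Hzx norm_scal Rabs_right; lra.
apply: Rle_trans (residual_le z _ (HDcv _ _ t HDy HDx Ht)) _.
have -> : vsub (F z) (vadd (vscal t (F y)) (vscal (1 - t) (F x))) =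
    vsub (vsub (vsub (F z) (F x)) (mat_apply (J x) (vsub z x)))
      (vscal t (vsub (vsub (F y) (F x)) (mat_apply (J x) h))).
  by rewrite Hzx mat_apply_scal; vext.
apply: Rle_trans (norm_sub_le _ _) _; rewrite norm_scal Rabs_right; last lra.
have H1 := Hsd x z Hx1 (segment_in_ball x y xbar _ t Hx1 Hy1 Ht).
have H2 := Rmult_le_compat_l t _ _ (proj1 Ht) (Hsd x y Hx1 Hy1).
by rewrite Hnzx in H1; rewrite -/h in H2; lra.
Qed.

Lemma amenable_nearly_convex : nearly_convex X xbar.
Proof.
move=> eps He.
have [kappa [dE [Hk [HdE Herr]]]] := error_bound.
set e' := eps / 2 / (kappa + 1).
have He' : 0 < e' by apply: Rdiv_lt_0_compat; lra.
have Hke : kappa * (2 * e') <= eps.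
  by have := frac_bound kappa (eps / 2) Hk ltac:(lra); rewrite /e'; lra.
have [dS [HdS Hseg]] := residual_segment e' He'.
exists (Rmin dE dS); split; first exact: Rmin_glb_lt.
move=> x y Hx Hy Hxb Hyb.
have HxE := Rlt_le_trans _ _ _ Hxb (Rmin_l _ _); have HyE := Rlt_le_trans _ _ _ Hyb (Rmin_l _ _).
have HxS := Rlt_le_trans _ _ _ Hxb (Rmin_r _ _); have HyS := Rlt_le_trans _ _ _ Hyb (Rmin_r _ _).
have [v [Hv Hvh]] : exists v, tangent_cone X x v /\ norm (vsub v (vsub y x)) <= eps * norm (vsub y x).
  apply: tangent_of_approx; first lra.
  move=> r; have Ht := inv_succ_pos r; have Ht1 := inv_succ_le1 r.
  have [w [Hw Hwz]] := Herr _ (segment_in_ball x y xbar _ (/ (INR r + 1)) HxE HyE ltac:(lra)).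
  exists w; split => //; apply: Rle_trans Hwz _.
  have := Hseg x y (/ (INR r + 1)) HxS HyS Hx Hy ltac:(lra).
  move=> /(Rmult_le_compat_l _ _ _ Hk) H; apply: Rle_trans H _.
  have Hth : 0 <= / (INR r + 1) * norm (vsub y x) by apply: Rmult_le_pos; [lra | exact: norm_ge0].
  by have := Rmult_le_compat_r _ _ _ Hth Hke; lra.
move=> eta Heta; exists (vadd x v); split; first by exists v.
have -> : vsub y (vadd x v) = vscal (-1) (vsub v (vsub y x)) by vext.
by rewrite norm_scal Rabs_Ropp Rabs_R1 Rmult_1_l (norm_sub_sym x y); lra.
Qed.

End Amenable.

Theorem theorem8p2 (n : nat) (X : E n -> Prop) (xbar : E n) :
  X xbar -> amenable X xbar -> nearly_convex X xbar /\ nearly_radial X xbar.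
Proof.
move=> HX [V [m [F [J [D [HV [HVx [HC1 [HDcl [HDcv [HXD HCQ]]]]]]]]]]].
have HNC := amenable_nearly_convex n m X xbar V F J D HX HV HVx HC1 HDcl HDcv HXD HCQ.
by split => //; exact: nearly_radial_of_nearly_convex.
Qed.
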